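(* Consider the infinite grid graph $G=P\times P$, where $P$ is the infinite path with vertex set $\mathbb{Z}$ and edges $\{i,i+1\}$, and let $d(u,v)$ denote the length of a shortest path between nodes $u,v$ of $G$. Let $M$ be a finite nonempty set of nodes (the meeting nodes). For a configuration at time $t$, let $\lambda_t(v)\in\mathbb{N}$ be the number of robots at node $v$ (finitely many robots in total), let $c_t(m)=\sum_{v} d(v,m)\,\lambda_t(v)$, and let $W(t)=\{m\in M : c_t(m)=\min_{m'\in M}c_t(m')\}$ be the set of Weber nodes at time $t$. Let $m\in W(t)$. Suppose the configuration at time $t'$ is obtained from that at time $t$ by moving either a single robot, or $j\ge 2$ robots located together on the same node, from a node $a$ to an adjacent node $b$ with $d(b,m)=d(a,m)-1$ (i.e. along a shortest path towards $m$). Then (1) $m\in W(t')$, and (2) $W(t')\subseteq W(t)$.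
   Context: Robots are located on nodes of the grid; several robots may occupy the same node (a multiplicity). The consistency $c_t(m)$ is the sum of the distances of all robots from $m$, counted with multiplicity. *)

From HB Require Import structures.
From mathcomp Require Import all_boot all_order all_algebra.
From mathcomp Require Import finmap.
Set Implicit Arguments. Unset Strict Implicit. Unset Printing Implicit Defensive.
Import Order.TTheory GRing.Theory Num.Theory.
Local Open Scope fset_scope.

Definition node := (int * int)%type.

Definition grid_adj (u v : node) : bool :=
  ((u.1 == v.1) && (`|u.2 - v.2|%N == 1%N)) ||
  ((u.2 == v.2) && (`|u.1 - v.1|%N == 1%N)).

(* Shortest-path distance in the grid P x P (= the L1 / Manhattan distance). *)
Definition d (u v : node) : nat := (`|u.1 - v.1| + `|u.2 - v.2|)%N.

Definition config := {fsfun node -> nat with 0%N}.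

Definition consistency (lam : config) (m : node) : nat :=
  (\sum_(v <- finsupp lam) d v m * lam v)%N.

Definition weber (M : {fset node}) (lam : config) (m : node) : bool :=
  (m \in M) && [forall m' : M, consistency lam m <= consistency lam (val m')]%N.

(* Moving k robots from a to a neighbour b changes every consistency by
   k (d(b,x) - d(a,x)), which lies in [-k, k] since d(a,b) = 1.  When b is
   one step closer to m, the consistency of m drops by exactly k, the
   largest possible decrease: so m stays a minimiser, and any new minimiser w
   satisfies c_t(w) <= c_t'(w) + k <= c_t'(m) + k = c_t(m). *)

From HB Require Import structures.
From mathcomp Require Import all_boot all_order all_algebra.
From mathcomp Require Import finmap.
From mathcomp Require Import zify.

Set Implicit Arguments.
Unset Strict Implicit.
Unset Printing Implicit Defensive.
Import Order.TTheory GRing.Theory Num.Theory.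
Local Open Scope fset_scope.

Lemma d_triangle (u v w : node) : (d u w <= d u v + d v w)%N.
Proof.
rewrite /d; have := leqD_dist u.1 v.1 w.1; have := leqD_dist u.2 v.2 w.2; lia.
Qed.

Lemma grid_adj_d (u v : node) : grid_adj u v -> d u v = 1%N.
Proof.
by rewrite /grid_adj /d => /orP[] /andP[/eqP-> /eqP->]; rewrite subrr.
Qed.

Lemma weberP (M : {fset node}) (lam : config) (m : node) :
  reflect (m \in M /\ forall x, x \in M -> (consistency lam m <= consistency lam x)%N)
          (weber M lam m).
Proof.
apply: (iffP andP) => -[mM minm]; split=> //.
  by move=> x xM; exact: (forallP minm [` xM]).
by apply/forallP => x; apply: minm; exact: valP.
Qed.

Lemma consistency_fsubset (lam : config) (S : {fset node}) (x : node) :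
  finsupp lam `<=` S -> consistency lam x = (\sum_(v <- S) d v x * lam v)%N.
Proof.
move=> suppS; rewrite /consistency (big_fset_incl _ suppS) // => v _.
by rewrite memNfinsupp => /eqP->; rewrite muln0.
Qed.

Section Move.

Variables (lam lam' : config) (a b : node) (k : nat).
Hypothesis k_le : (k <= lam a)%N.
Hypothesis lam'E : forall v,
  lam' v = (lam v - (if v == a then k else 0) + (if v == b then k else 0))%N.

Lemma consistency_move (x : node) :
  (consistency lam' x + k * d a x = consistency lam x + k * d b x)%N.
Proof.
pose S := finsupp lam `|` finsupp lam' `|` [fset a; b].
have lamS : finsupp lam `<=` S by apply/fsubsetP => v vS; rewrite !inE vS.
have lam'S : finsupp lam' `<=` S by apply/fsubsetP => v vS; rewrite !inE vS orbT.
have sum_at c y : y \in S -> (\sum_(v <- S) (if v == y then c else 0))%N = c.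
  move=> yS; rewrite (bigD1_seq y) ?fset_uniq //= eqxx.
  by rewrite big1 ?addn0 // => v /negbTE->.
have aS : a \in S by rewrite !inE eqxx !orbT.
have bS : b \in S by rewrite !inE eqxx !orbT.
rewrite (consistency_fsubset x lamS) (consistency_fsubset x lam'S).
rewrite -(sum_at (k * d a x) a aS) -(sum_at (k * d b x) b bS) -!big_split /=.
apply: eq_bigr => v _; rewrite lam'E.
case: (eqVneq v a) => [->|_]; case: eqVneq => [<-|_]; nia.
Qed.

Lemma consistency_move_toward (m : node) :
  (d b m + 1)%N = d a m -> (consistency lam' m + k = consistency lam m)%N.
Proof. move=> closer; have := consistency_move m; rewrite -closer; nia. Qed.

Hypothesis adj_ab : grid_adj a b.

Lemma consistency_move_ge (x : node) : (consistency lam x <= consistency lam' x + k)%N.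
Proof.
have := consistency_move x; have := d_triangle a b x.
rewrite (grid_adj_d adj_ab); nia.
Qed.

End Move.

Theorem lemma1 (M : {fset node}) (lam lam' : config) (m a b : node) (k : nat) :
  M != fset0 ->
  weber M lam m ->
  (1 <= k <= lam a)%N ->
  grid_adj a b ->
  (d b m + 1)%N = d a m ->
  (forall v, lam' v = (lam v - (if v == a then k else 0) + (if v == b then k else 0))%N) ->
  weber M lam' m /\ (forall w, weber M lam' w -> weber M lam w).
Proof.
move=> _ /weberP[mM minm] /andP[_ k_le] adj closer lam'E.
have cm := consistency_move_toward k_le lam'E closer.
have ge x := consistency_move_ge k_le lam'E adj x.
have minm' x : x \in M -> (consistency lam' m <= consistency lam' x)%N.
  by move=> xM; have := minm x xM; have := ge x; lia.
split; first by apply/weberP; split.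
move=> w /weberP[wM minw]; apply/weberP; split=> // x xM.
have := minw m mM; have := minm x xM; have := ge w; lia.
Qed.
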